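(* Let $\mathcal{C}_0\subseteq\mathbb{R}^d$ be a cube, $f$ continuous on $\mathcal{C}_0$, $\mathbf{x}$ a sampling rule and $\mathbf{qlb}$ a quasi-lower bound rule for minimizing $f$ over $\mathcal{C}_0$, and $\epsilon>0$. Consider the breadth-first qBnB algorithm described in the context. Then: 1. Every value assigned to $\mathrm{lb}$ by the algorithm satisfies $\mathrm{lb}\le f_*$. 2. If there is a continuous $\psi:\mathbb{R}_{\ge0}\to\mathbb{R}_{\ge0}$ with $\psi(0)=0$ such that $f(\mathbf{x}(\mathcal{C}))-\mathbf{qlb}(\mathcal{C})\le\psi(r)$ for every subcube $\mathcal{C}$ of $\mathcal{C}_0$ of radius $r$, then the algorithm terminates after finitely many steps and its output $x_{\mathrm{best}}$ is $\epsilon$-optimal, i.e. $f(x_{\mathrm{best}})-f_*<\epsilon$.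
   Context: A cube is a set $\{x:|x_i-a_i|\le h_i\}$ with center $a$, radius $\|h\|_2$; $\mathcal{K}$ is the set of subcubes of $\mathcal{C}_0$; $f_*(\mathcal{C})=\min_\mathcal{C}f$, $f_*=\min_{\mathcal{C}_0}f$. A sampling rule is a map $\mathbf{x}:\mathcal{K}\to\mathcal{C}_0$ with $\mathbf{x}(\mathcal{C})\in\mathcal{C}$. A quasi-lower bound rule is a map $\mathbf{qlb}:\mathcal{K}\to[-\infty,\infty]$ with $\mathbf{qlb}(\mathcal{C})\le f_*(\mathcal{C})$ whenever $f_*(\mathcal{C})=f_*$. Algorithm: set $g=0$, $x_{\mathrm{best}}=\mathbf{x}(\mathcal{C}_0)$, $\mathrm{ub}=f(x_{\mathrm{best}})$, $\mathrm{lb}=\mathbf{qlb}(\mathcal{C}_0)$, $L_0=\{(\mathcal{C}_0,\mathbf{qlb}(\mathcal{C}_0))\}$. While $\mathrm{ub}-\mathrm{lb}>\epsilon$: create empty list $L_{g+1}$; for each $(\mathcal{C},q)\in L_g$, if $q\le\mathrm{ub}$ (current value), bisect $\mathcal{C}$ into two equal cubes $\mathcal{C}_1,\mathcal{C}_2$ along a longest edge, and for $i=1,2$ compute $q_i=\mathbf{qlb}(\mathcal{C}_i)$, $x_i=\mathbf{x}(\mathcal{C}_i)$, append $(\mathcal{C}_i,q_i)$ to $L_{g+1}$, and if $f(x_i)<\mathrm{ub}$ set $\mathrm{ub}=f(x_i)$, $x_{\mathrm{best}}=x_i$. After processing $L_g$, set $g\leftarrow g+1$ and $\mathrm{lb}=\min\{q:(\mathcal{C},q)\in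 L_g\}$. On exit output $x_{\mathrm{best}}$. *)

From HB Require Import structures.
From mathcomp Require Import all_boot all_order all_algebra.
From mathcomp Require Import all_classical all_reals all_analysis.
Set Implicit Arguments. Unset Strict Implicit. Unset Printing Implicit Defensive.
Import Order.TTheory GRing.Theory Num.Theory.
Import numFieldNormedType.Exports.
Local Open Scope classical_set_scope.
Local Open Scope ring_scope.

Section QBnB.
Variables (R : realType) (d : nat).

Record cube := Cube { center : 'rV[R]_d ; hw : 'rV[R]_d }.

Definition valid_cube (C : cube) : Prop := forall i : 'I_d, 0 < hw C ord0 i.

Definition cube_set (C : cube) : set 'rV[R]_d :=
  [set x | forall i : 'I_d, `|x ord0 i - center C ord0 i| <= hw C ord0 i].

Definition cube_radius (C : cube) : R := Num.sqrt (\sum_(i < d) (hw C ord0 i) ^+ 2).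

Definition subcube (C0 C : cube) : Prop :=
  valid_cube C /\ cube_set C `<=` cube_set C0.

(* f_*(C) = min_C f, written as the infimum (attained for continuous f) *)
Definition fmin (f : 'rV[R]_d -> R) (C : cube) : \bar R :=
  ereal_inf [set (f x)%:E | x in cube_set C].

Definition sampling_rule (C0 : cube) (xr : cube -> 'rV[R]_d) : Prop :=
  forall C, subcube C0 C -> cube_set C (xr C).

Definition qlb_rule (f : 'rV[R]_d -> R) (C0 : cube) (qlb : cube -> \bar R) : Prop :=
  forall C, subcube C0 C -> fmin f C = fmin f C0 -> (qlb C <= fmin f C)%E.

Definition longest_edge_sel (sel : cube -> 'I_d) : Prop :=
  forall C (i : 'I_d), hw C ord0 i <= hw C ord0 (sel C).

Definition bisect (sel : cube -> 'I_d) (C : cube) : cube * cube :=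
  let k := sel C in
  let h' := \row_j (if j == k then hw C ord0 j / 2 else hw C ord0 j) in
  (Cube (\row_j (if j == k then center C ord0 j - hw C ord0 j / 2 else center C ord0 j)) h',
   Cube (\row_j (if j == k then center C ord0 j + hw C ord0 j / 2 else center C ord0 j)) h').

Record state := State {
  st_ub : R ; st_xbest : 'rV[R]_d ; st_lb : \bar R ; st_L : seq (cube * \bar R) }.

Section Algo.
Variables (f : 'rV[R]_d -> R) (xr : cube -> 'rV[R]_d) (qlb : cube -> \bar R)
  (sel : cube -> 'I_d) (eps : R) (C0 : cube).

Definition upd (p : R * 'rV[R]_d) (x : 'rV[R]_d) : R * 'rV[R]_d :=
  if f x < p.1 then (f x, x) else p.

(* processing one entry (C,q) of L_g, with accumulator (ub, x_best, L_{g+1}) *)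
Definition proc (acc : (R * 'rV[R]_d) * seq (cube * \bar R)) (e : cube * \bar R) :=
  let: (p, L') := acc in
  let: (C, q) := e in
  if (q <= (p.1)%:E)%E then
    let: (C1, C2) := bisect sel C in
    let p1 := upd p (xr C1) in
    let p2 := upd p1 (xr C2) in
    (p2, L' ++ [:: (C1, qlb C1); (C2, qlb C2)])
  else acc.

Definition init : state :=
  State (f (xr C0)) (xr C0) (qlb C0) [:: (C0, qlb C0)].

(* one pass of the while loop: generation g -> g+1;
   lb := min of the quasi-lower bounds in L_{g+1} (min of empty list = +oo) *)
Definition next (s : state) : state :=
  let: (p, L') := foldl proc ((st_ub s, st_xbest s), [::]) (st_L s) in
  State p.1 p.2 (\big[Order.min/+oo%E]_(e <- L') e.2) L'.

Definition running (s : state) : bool := (eps%:E < (st_ub s)%:E - st_lb s)%E.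

(* the loop; once the condition fails, the state is frozen (= exited) *)
Definition step (s : state) : state := if running s then next s else s.

Definition run (g : nat) : state := iter g step init.

End Algo.
End QBnB.

From Pilot Require Import Defs.
From HB Require Import structures.
From mathcomp Require Import all_boot all_order all_algebra.
From mathcomp Require Import all_classical all_reals all_analysis.
From mathcomp Require Import lra.
Set Implicit Arguments. Unset Strict Implicit. Unset Printing Implicit Defensive.
Import Order.TTheory GRing.Theory Num.Theory.
Import numFieldNormedType.Exports.
Local Open Scope classical_set_scope.
Local Open Scope ring_scope.

(* A cube C with f_*(C) = f_* is never discarded: its quasi-lower bound is at most
   f_* <= ub, and bisection hands the minimum on to one of its halves.  Hence every
   generation contains such a cube and lb <= f_*.  Bisecting along a longest edge shrinks
   the sum of the half-widths, an upper bound for the radius, by the factor 1 - 1/(2d), so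
   eventually all radii lie where psi < eps.  Then every stored bound exceeds
   f(x(C)) - eps >= ub - eps, the loop stops, and ub - lb <= eps together with lb <= f_*
   makes x_best eps-optimal. *)

Lemma continuous_at0_small (R : realType) (psi : R -> R) (eps : R) :
  {within `[0, +oo[%classic, continuous psi} -> psi 0 = 0 -> 0 < eps ->
  exists2 del : R, 0 < del & forall r, 0 <= r -> r < del -> psi r < eps.
Proof.
move=> /subspace_continuousP psi_cont psi0 eps_gt0.
have /psi_cont : `[0, +oo[%classic (0 : R) by rewrite /= in_itv /= lexx.
move=> /cvgrPdist_lt /(_ _ eps_gt0).
rewrite near_withinE => /nbhs_normP [del del_gt0 near0].
exists del => // r r_ge0 r_lt.
have := near0 r; rewrite /from_subspace psi0 sub0r normrN.
move=> /(_ _ _)/(le_lt_trans (ler_norm _)); apply.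
  by rewrite /ball_ /= sub0r normrN ger0_norm.
by rewrite /= in_itv /= r_ge0.
Qed.

Lemma exists_expr_lt (R : realType) (q c : R) : 0 <= q < 1 -> 0 < c ->
  exists g : nat, q ^+ g < c.
Proof.
move=> /andP[q_ge0 q_lt1] c_gt0.
have := @cvg_expr R q; rewrite ger0_norm // => /(_ q_lt1).
move=> /cvgrPdist_lt /(_ _ c_gt0) [N _ HN].
exists N; have := HN N (leqnn N).
by rewrite sub0r normrN => /(le_lt_trans (ler_norm _)).
Qed.

Section Bisection.
Variables (R : realType) (d : nat) (sel : cube R d -> 'I_d).

(* Decidable equality on cubes lets the candidate lists use [\in]. *)
Definition cube_code (C : cube R d) := (Defs.center C, hw C).
Definition cube_decode (p : 'rV[R]_d * 'rV[R]_d) := Cube p.1 p.2.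
Lemma cube_codeK : cancel cube_code cube_decode. Proof. by case. Qed.
HB.instance Definition _ := Equality.copy (cube R d) (can_type cube_codeK).

Definition children (C : cube R d) : seq (cube R d) :=
  [:: (bisect sel C).1; (bisect sel C).2].

Definition hw_sum (C : cube R d) : R := \sum_(i < d) hw C ord0 i.

Lemma hw_child C C' j : C' \in children C ->
  hw C' ord0 j = if j == sel C then hw C ord0 j / 2 else hw C ord0 j.
Proof. by rewrite !inE => /orP[]/eqP->; rewrite /bisect /= mxE. Qed.

Lemma valid_child C C' : valid_cube C -> C' \in children C -> valid_cube C'.
Proof.
move=> vC C'C i; rewrite (hw_child _ C'C); have := vC i; case: eqP => // _; lra.
Qed.

Lemma child_subset C C' : C' \in children C -> cube_set C' `<=` cube_set C.
Proof.
move=> C'C x x_C' i; have := x_C' i; rewrite (hw_child _ C'C).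
move: C'C; rewrite !inE => /orP[]/eqP->; rewrite /bisect /= !mxE;
  case: eqP => // _; rewrite !ler_norml => /andP[? ?]; apply/andP; split; lra.
Qed.

Lemma children_cover C x : cube_set C x ->
  exists2 C', C' \in children C & cube_set C' x.
Proof.
move=> x_C; have [le|lt] := leP (x ord0 (sel C)) (Defs.center C ord0 (sel C)).
- exists (bisect sel C).1; first by rewrite inE eqxx.
  move=> i; have := x_C i; rewrite /bisect /= !mxE; case: eqP => // ->.
  by rewrite !ler_norml => /andP[? ?]; apply/andP; split; lra.
- exists (bisect sel C).2; first by rewrite !inE eqxx orbT.
  move=> i; have := x_C i; rewrite /bisect /= !mxE; case: eqP => // ->.
  by rewrite !ler_norml => /andP[? ?]; apply/andP; split; lra.
Qed.

Lemma hw_sum_child C C' : C' \in children C ->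
  hw_sum C' = hw_sum C - hw C ord0 (sel C) / 2.
Proof.
move=> C'C; rewrite /hw_sum (bigD1 (sel C)) //= [in RHS](bigD1 (sel C)) //=.
rewrite (hw_child _ C'C) eqxx (eq_bigr (fun i => hw C ord0 i)); first lra.
by move=> i /negPf i_sel; rewrite (hw_child _ C'C) i_sel.
Qed.

Lemma hw_sum_le_longest C : longest_edge_sel sel ->
  hw_sum C <= d%:R * hw C ord0 (sel C).
Proof.
move=> longest; apply: le_trans (_ : \sum_(i < d) hw C ord0 (sel C) <= _).
  by apply: ler_sum => i _; apply: longest.
by rewrite sumr_const card_ord mulr_natl.
Qed.

Lemma hw_sum_child_le C C' : (0 < d)%N -> longest_edge_sel sel ->
  C' \in children C -> hw_sum C' <= (1 - (2 * d%:R)^-1) * hw_sum C.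
Proof.
move=> d_gt0 longest /hw_sum_child ->.
have d_pos : 0 < d%:R :> R by rewrite ltr0n.
have : hw_sum C / d%:R <= hw C ord0 (sel C).
  by rewrite ler_pdivrMr // mulrC hw_sum_le_longest.
rewrite mulrBl mul1r invfM -mulrA [_^-1 * hw_sum C]mulrC.
set t := hw_sum C / d%:R; lra.
Qed.

Lemma hw_sum_gt0 C : (0 < d)%N -> valid_cube C -> 0 < hw_sum C.
Proof.
move=> d_gt0 vC; rewrite /hw_sum (bigD1 (Ordinal d_gt0)) //=.
by rewrite ltr_pwDl ?vC // sumr_ge0 // => i _; apply/ltW/vC.
Qed.

Lemma radius_le_hw_sum C : valid_cube C -> cube_radius C <= hw_sum C.
Proof.
move=> vC; have hw_ge0 i : 0 <= hw C ord0 i by apply/ltW/vC.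
have sum_ge0 : 0 <= hw_sum C by apply: sumr_ge0.
rewrite /cube_radius -(ger0_norm sum_ge0) -sqrtr_sqr ler_sqrt ?exprn_ge0 //.
rewrite expr2 /hw_sum mulr_sumr; apply: ler_sum => i _.
rewrite expr2 -/(hw_sum C) ler_wpM2r // /hw_sum (bigD1 i) //= lerDl.
exact: sumr_ge0.
Qed.

Lemma subcube_child C0 C C' : subcube C0 C -> C' \in children C -> subcube C0 C'.
Proof.
move=> [vC C_C0] C'C; split; first exact: valid_child C'C.
exact: subset_trans (child_subset C'C) C_C0.
Qed.

Variable f : 'rV[R]_d -> R.

Lemma fmin_subset A B : cube_set A `<=` cube_set B -> (fmin f B <= fmin f A)%E.
Proof.
by move=> AB; apply: ereal_inf_le_tmp => _ [x Ax <-]; exists x => //; exact: AB.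
Qed.

Lemma fmin_le A x : cube_set A x -> (fmin f A <= (f x)%:E)%E.
Proof. by move=> Ax; apply: ereal_inf_lbound; exists x. Qed.

Lemma fmin_child C : exists2 C', C' \in children C & fmin f C' = fmin f C.
Proof.
have min_le C' : C' \in children C -> (fmin f C <= fmin f C')%E.
  by move=> /child_subset; apply: fmin_subset.
have children_le : forall m, (forall C', C' \in children C -> (m <= fmin f C')%E) ->
    (m <= fmin f C)%E.
  move=> m m_le; apply: le_ereal_inf_tmp => _ [x x_C <-].
  have [C' C'C x_C'] := children_cover x_C.
  exact: le_trans (m_le _ C'C) (fmin_le x_C').
set C1 := (bisect sel C).1; set C2 := (bisect sel C).2.
have C1C : C1 \in children C by rewrite inE eqxx.
have C2C : C2 \in children C by rewrite !inE eqxx orbT.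
have [le12|lt21] := leP (fmin f C1) (fmin f C2); [exists C1|exists C2] => //;
  apply/eqP; rewrite eq_le min_le // andbT; apply: children_le => C';
  rewrite !inE => /orP[]/eqP-> //; exact: ltW.
Qed.

End Bisection.

Section Generation.
Variables (R : realType) (d : nat) (f : 'rV[R]_d -> R) (xr : cube R d -> 'rV[R]_d)
  (qlb : cube R d -> \bar R) (sel : cube R d -> 'I_d).

Local Notation proc := (proc f xr qlb sel).
Local Notation upd := (upd f).
Local Notation children := (children sel).

Definition offspring (C : cube R d) : seq (cube R d * \bar R) :=
  [seq (C', qlb C') | C' <- children C].

Lemma procE acc e : proc acc e =
  if (e.2 <= (acc.1.1)%:E)%E then
    (foldl upd acc.1 [seq xr C' | C' <- children e.1], acc.2 ++ offspring e.1)
  else acc.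
Proof. by case: acc => p L; case: e => C q /=; case: (bisect sel C). Qed.

Lemma foldl_upd_le p xs : (foldl upd p xs).1 <= p.1.
Proof.
elim: xs p => //= x xs IH p; apply: le_trans (IH _) _.
by rewrite /Defs.upd; case: ifP => // /ltW.
Qed.

Lemma foldl_upd_le_sample p xs x : x \in xs -> (foldl upd p xs).1 <= f x.
Proof.
elim: xs p => //= y xs IH p; rewrite inE => /orP[/eqP->|/IH//].
apply: le_trans (foldl_upd_le _ _) _.
by rewrite /Defs.upd; case: ifP => //= /negbT; rewrite -leNgt.
Qed.

Lemma foldl_updP (P : R * 'rV[R]_d -> Prop) p xs :
  P p -> (forall x, x \in xs -> P (f x, x)) -> P (foldl upd p xs).
Proof.
elim: xs p => //= x xs IH p Pp Pxs; apply: IH => [|y y_xs]; last first.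
  by apply: Pxs; rewrite inE y_xs orbT.
by rewrite /Defs.upd; case: ifP => // _; apply: Pxs; rewrite inE eqxx.
Qed.

Lemma fold_proc_ub_le L acc : (foldl proc acc L).1.1 <= acc.1.1.
Proof.
elim: L acc => //= e L' IH acc'; apply: le_trans (IH _) _.
by rewrite procE; case: ifP => // _; apply: foldl_upd_le.
Qed.

Lemma fold_procP L acc (P : R * 'rV[R]_d -> Prop) : P acc.1 ->
  (forall e C', e \in L -> C' \in children e.1 -> P (f (xr C'), xr C')) ->
  P (foldl proc acc L).1.
Proof.
elim: L acc => //= e L' IH acc' Pacc Pchild; apply: IH => [|e' C' e'L']; last first.
  by apply: Pchild; rewrite inE e'L' orbT.
rewrite procE; case: ifP => // _; apply: foldl_updP => // _ /mapP[C' C'e ->].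
by apply: Pchild C'e; rewrite inE eqxx.
Qed.

Lemma fold_proc_subset L acc : {subset acc.2 <= (foldl proc acc L).2}.
Proof.
elim: L acc => [|e L' IH] acc' x x_acc //=; apply: IH.
by rewrite procE; case: ifP => // _; rewrite mem_cat x_acc.
Qed.

Lemma mem_fold_proc L acc e' : e' \in (foldl proc acc L).2 ->
  e' \in acc.2 \/ exists2 e, e \in L & e' \in offspring e.1.
Proof.
elim: L acc => /= [|e L' IH] acc' e'_out; first by left.
case: (IH _ e'_out) => [|[e0 e0L' e'e0]]; last first.
  by right; exists e0 => //; rewrite inE e0L' orbT.
rewrite procE; case: ifP => _; last by left.
by rewrite mem_cat => /orP[]; [left|right; exists e => //; rewrite inE eqxx].
Qed.

Lemma fold_proc_ub_le_sample L acc : {in acc.2, forall e, acc.1.1 <= f (xr e.1)} ->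
  {in (foldl proc acc L).2, forall e, (foldl proc acc L).1.1 <= f (xr e.1)}.
Proof.
elim: L acc => //= e L' IH acc' acc_le; apply: IH => e'.
rewrite procE; case: ifP => [_|_ /acc_le//]; rewrite mem_cat => /orP[/acc_le|].
  by apply: le_trans; apply: foldl_upd_le.
move=> /mapP[C' C'e ->]; apply: foldl_upd_le_sample; exact: map_f.
Qed.

Lemma offspring_fold_proc L acc e : e \in L -> (e.2 <= (foldl proc acc L).1.1%:E)%E ->
  {subset offspring e.1 <= (foldl proc acc L).2}.
Proof.
elim: L acc => //= e0 L' IH acc'; rewrite inE => /orP[/eqP->|eL'] e_le.
  have e0_le : (e0.2 <= (acc'.1.1)%:E)%E.
    by apply: le_trans e_le _; rewrite lee_fin; exact: (fold_proc_ub_le (e0 :: L')).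
  move=> x x_off; apply: fold_proc_subset.
  by rewrite procE e0_le mem_cat x_off orbT.
exact: IH.
Qed.

Lemma nextE s : let out := foldl proc ((st_ub s, st_xbest s), [::]) (st_L s) in
  Defs.next f xr qlb sel s =
  State out.1.1 out.1.2 (\big[Order.min/+oo%E]_(e <- out.2) e.2) out.2.
Proof. by rewrite /Defs.next; case: foldl. Qed.

End Generation.

Section Correctness.
Variables (R : realType) (d : nat) (C0 : cube R d) (f : 'rV[R]_d -> R)
  (xr : cube R d -> 'rV[R]_d) (qlb : cube R d -> \bar R)
  (sel : cube R d -> 'I_d) (eps : R).
Hypotheses (vC0 : valid_cube C0) (xr_in : sampling_rule C0 xr)
  (qlbP : qlb_rule f C0 qlb) (longest : longest_edge_sel sel).

Local Notation run := (Defs.run f xr qlb sel eps C0).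
Local Notation bigmin L := (\big[Order.min/+oo%E]_(e <- L) e.2).

Definition incumbent (p : R * 'rV[R]_d) : Prop := p.1 = f p.2 /\ cube_set C0 p.2.

Definition sound (s : state R d) : Prop :=
  [/\ {in st_L s, forall e, e.2 = qlb e.1 /\ subcube C0 e.1},
      incumbent (st_ub s, st_xbest s),
      st_lb s = bigmin (st_L s) &
      exists2 C, (C, qlb C) \in st_L s & fmin f C = fmin f C0].

Lemma sound_lb_le s : sound s -> (st_lb s <= fmin f C0)%E.
Proof.
move=> [entries _ -> [C CL optC]].
apply: le_trans (ge_bigmin_seq _ _ _ _ CL isT) _ => /=.
by rewrite -optC; apply: qlbP => //; have [] := entries _ CL.
Qed.

Lemma sound_init : sound (Defs.init f xr qlb C0).
Proof.
have C0C0 : subcube C0 C0 by split.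
split => /=.
- by move=> e; rewrite inE => /eqP->.
- by split => //; apply: xr_in.
- by rewrite big_seq1.
- by exists C0; rewrite ?inE.
Qed.

Lemma sound_next s : sound s -> sound (Defs.next f xr qlb sel s).
Proof.
move=> [entries [ub_f xbest_C0] _ [C CL optC]]; rewrite nextE /=.
set out := foldl _ _ _.
have sub_child e C' : e \in st_L s -> C' \in children sel e.1 -> subcube C0 C'.
  by move=> eL; apply: subcube_child; have [] := entries _ eL.
have out_inc : incumbent out.1.
  apply: fold_procP => // e C' eL /(sub_child _ _ eL) subC'; split => //.
  exact: subC'.2 _ (xr_in subC').
split => //.
- move=> e' /mem_fold_proc [//|[e eL /mapP[C' C'e ->]]].
  by split => //; apply: sub_child C'e.
- have [C' C'C optC'] := fmin_child sel f C.
  exists C'; last by rewrite optC'.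
  apply: (offspring_fold_proc CL); last exact: map_f.
  have [_ subC] := entries _ CL; apply: le_trans (qlbP subC optC) _.
  by rewrite optC (proj1 out_inc); apply: fmin_le; case: out_inc.
Qed.

Lemma sound_run g : sound (run g).
Proof.
elim: g => [|g IH]; first exact: sound_init.
by rewrite /Defs.run iterS /step; case: ifP => // _; apply: sound_next.
Qed.

Lemma not_running_of_lb (s : state R d) :
  ((st_ub s - eps)%:E <= st_lb s)%E -> ~~ running eps s.
Proof.
rewrite /running -leNgt; case: (st_lb s) => [l| |] //=; last by rewrite leNye.
by rewrite !lee_fin => ?; lra.
Qed.

Lemma eps_optimal (s : state R d) : sound s -> ~~ running eps s ->
  ((f (st_xbest s))%:E - fmin f C0 <= eps%:E)%E.
Proof.
move=> sound_s; rewrite /running -leNgt; apply: le_trans.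
have [_ [<- _] _ _] := sound_s; exact: leeB (sound_lb_le sound_s).
Qed.

Definition contraction : R := 1 - (2 * d%:R)^-1.

Lemma contraction_ge0_lt1 : (0 < d)%N -> 0 <= contraction < 1.
Proof.
move=> d_gt0; have d2_gt0 : 0 < 2 * d%:R :> R by rewrite mulr_gt0 ?ltr0n.
rewrite subr_ge0 invf_le1 // ltrBlDr ltrDl invr_gt0 d2_gt0 andbT.
by rewrite -natrM ler1n muln_gt0.
Qed.

Definition refined g (s : state R d) : Prop :=
  {in st_L s, forall e, hw_sum e.1 <= contraction ^+ g * hw_sum C0 /\
                        st_ub s <= f (xr e.1)}.

Lemma run_stopped_or_refined g : (0 < d)%N ->
  ~~ running eps (run g) \/ refined g (run g).
Proof.
move=> d_gt0; elim: g => [|g IH].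
  by right => e; rewrite inE => /eqP-> /=; rewrite expr0 mul1r.
rewrite /Defs.run iterS -/(run g) /step.
case: ifP => [running_g|/negbT]; last by left.
case: IH => [|ref]; first by rewrite running_g.
right; rewrite nextE /= => e' e'_out; split; last first.
  by apply: fold_proc_ub_le_sample e'_out.
case: (mem_fold_proc e'_out) => [//|[e eL /mapP[C' C'e ->]]] /=.
apply: le_trans (hw_sum_child_le d_gt0 longest C'e) _.
have /andP[c_ge0 _] := contraction_ge0_lt1 d_gt0.
by rewrite exprS -mulrA ler_wpM2l //; have [] := ref e eL.
Qed.

Lemma refined_stopped g s (psi : R -> R) del : sound s -> refined g s ->
  (forall r, 0 <= r -> r < del -> psi r < eps) ->
  (forall C, subcube C0 C -> ((f (xr C))%:E - qlb C <= (psi (cube_radius C))%:E)%E) ->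
  contraction ^+ g * hw_sum C0 < del -> ~~ running eps s.
Proof.
move=> [entries _ lbE _] ref psi_small qlb_psi fine; apply: not_running_of_lb.
rewrite lbE big_seq; apply: le_bigmin => [|e eL]; first exact: leey.
have [-> subC] := entries _ eL; have [hw_le ub_le] := ref _ eL.
have psi_lt : psi (cube_radius e.1) < eps.
  apply: psi_small; first exact: sqrtr_ge0.
  exact: le_lt_trans (radius_le_hw_sum subC.1) (le_lt_trans hw_le fine).
have := qlb_psi _ subC; case: (qlb e.1) => [q| |] //=; last by rewrite leey.
by rewrite !lee_fin => ?; lra.
Qed.

End Correctness.

Theorem theorem2 (R : realType) (d : nat) (C0 : cube R d)
    (f : 'rV[R]_d -> R) (xr : cube R d -> 'rV[R]_d) (qlb : cube R d -> \bar R)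
    (sel : cube R d -> 'I_d) (eps : R) :
  (0 < d)%N ->
  valid_cube C0 ->
  {within cube_set C0, continuous f} ->
  sampling_rule C0 xr ->
  qlb_rule f C0 qlb ->
  longest_edge_sel sel ->
  0 < eps ->
  (forall g : nat, (st_lb (run f xr qlb sel eps C0 g) <= fmin f C0)%E) /\
  ((exists psi : R -> R,
      {within `[0, +oo[%classic, continuous psi} /\ psi 0 = 0 /\
      (forall r, 0 <= r -> 0 <= psi r) /\
      (forall C, subcube C0 C -> ((f (xr C))%:E - qlb C <= (psi (cube_radius C))%:E)%E)) ->
   exists g : nat,
     ~~ running eps (run f xr qlb sel eps C0 g) /\
     ((f (st_xbest (run f xr qlb sel eps C0 g)))%:E - fmin f C0 <= eps%:E)%E).
Proof.
move=> d_gt0 vC0 _ xr_in qlbP longest eps_gt0.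
have sound_g := sound_run sel eps vC0 xr_in qlbP.
split=> [g|[psi [psi_cont [psi0 [_ qlb_psi]]]]]; first exact: sound_lb_le (sound_g g).
have [del del_gt0 psi_small] := continuous_at0_small psi_cont psi0 eps_gt0.
have [g contr_g] := exists_expr_lt (@contraction_ge0_lt1 R d d_gt0)
  (divr_gt0 del_gt0 (hw_sum_gt0 d_gt0 vC0)).
have stopped : ~~ running eps (run f xr qlb sel eps C0 g).
  have [//|refined_g] := run_stopped_or_refined C0 f xr qlb eps longest g d_gt0.
  apply: refined_stopped (sound_g g) refined_g psi_small qlb_psi _.
  by rewrite -ltr_pdivlMr // hw_sum_gt0.
exists g; split=> //; exact (eps_optimal qlbP (sound_g g) stopped).
Qed.
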